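(* For all integers $k\ge 3$ and $n\ge 2$, the snake graph $S_{k,n}$ is odd prime.
   Context: All graphs are finite and simple. A graph $G$ of order $N$ is odd prime if there is a bijection $\ell:V(G)\to\{1,3,\ldots,2N-1\}$ with $\gcd(\ell(u),\ell(v))=1$ for every edge $uv$. The snake graph $S_{k,n}$ consists of a path $v_1,v_2,\ldots,v_n$ together with, for each $i=1,\ldots,n-1$, new vertices $w_{i,1},\ldots,w_{i,k-2}$ and the path $v_i,w_{i,1},w_{i,2},\ldots,w_{i,k-2},v_{i+1}$; thus each edge $v_iv_{i+1}$ lies on a $k$-cycle, and $S_{k,n}$ has $(k-1)(n-1)+1$ vertices. *)

From mathcomp Require Import all_boot.
Set Implicit Arguments. Unset Strict Implicit. Unset Printing Implicit Defensive.

Definition simple_graph (T : finType) (e : rel T) : Prop :=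
  irreflexive e /\ symmetric e.

(* Odd prime labeling: a bijection l : V -> {1,3,...,2N-1} (N = #|V|),
   encoded as a bijection f : V -> 'I_#|V| with l x = 2 * f x + 1,
   such that adjacent vertices receive coprime labels. *)
Definition odd_prime (T : finType) (e : rel T) : Prop :=
  exists f : T -> 'I_#|T|,
    bijective f /\
    forall u v, e u v -> coprime (2 * f u + 1) (2 * f v + 1).

(* Vertices of S_{k,n}: inl i  = v_{i+1}      (0 <= i < n),
                        inr (i, j) = w_{i+1, j+1} (0 <= i < n-1, 0 <= j < k-2). *)
Definition snake_vertex (k n : nat) : finType :=
  ('I_n + ('I_n.-1 * 'I_k.-2))%type.

Definition snake_arc (k n : nat) (x y : snake_vertex k n) : bool :=
  match x, y with
  | inl a, inl b => b == a.+1 :> nat                     (* v_i v_{i+1} *)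
  | inl a, inr (i, j) => (i == a :> nat) && (j == 0 :> nat)   (* v_i w_{i,1} *)
  | inr (i, j), inr (i', j') => (i' == i) && (j' == j.+1 :> nat) (* w_{i,j} w_{i,j+1} *)
  | inr (i, j), inl b => (j == k - 3 :> nat) && (b == i.+1 :> nat) (* w_{i,k-2} v_{i+1} *)
  end.

Definition snake_adj (k n : nat) : rel (snake_vertex k n) :=
  fun x y => snake_arc x y || snake_arc y x.

(* Number the vertices along the snake with d = k - 1 numbers per segment:
   v_{a+1} gets a d and w_{i+1,j+1} gets i d + j + 1.  Every edge then joins
   consecutive numbers, except v_{a+1} v_{a+2}, which joins a d and (a+1) d.
   The odd labels 2x+1 of consecutive numbers differ by 2 and are coprime;
   those of a d and (a+1) d differ by 2d, while 2ad+1 is odd and congruent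
   to 1 modulo d, so they are coprime as well.  This works for every k >= 2. *)

From mathcomp Require Import all_boot.
From mathcomp Require Import zify.

Set Implicit Arguments.
Unset Strict Implicit.
Unset Printing Implicit Defensive.

Lemma coprime_odd_multiples_succ a d :
  coprime (2 * (a * d) + 1) (2 * (a.+1 * d) + 1).
Proof.
have -> : 2 * (a.+1 * d) + 1 = 2 * d + (2 * (a * d) + 1) by lia.
rewrite /coprime gcdnDr -/(coprime _ _) coprimeMr coprimen2 addn1 /=.
rewrite mul2n odd_double /= coprime_sym /coprime -addn1 -mul2n mulnA.
by rewrite gcdnMDl gcdn1.
Qed.

Lemma coprime_consecutive_odd x : coprime (2 * x + 1) (2 * x.+1 + 1).
Proof. by have := coprime_odd_multiples_succ x 1; rewrite !muln1. Qed.

Lemma odd_prime_inj (T : finType) (e : rel T) (g : T -> nat) :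
  injective g -> (forall x, g x < #|T|) ->
  (forall u v, e u v -> coprime (2 * g u + 1) (2 * g v + 1)) -> odd_prime e.
Proof.
move=> g_inj g_lt g_cop; exists (fun x => Ordinal (g_lt x)); split=> //.
apply: inj_card_bij; last by rewrite card_ord.
by move=> x y /(congr1 val) /g_inj.
Qed.

Section SnakeLabel.

Variables k n : nat.
Hypothesis k_gt1 : 1 < k.

Definition snake_label (x : snake_vertex k n) : nat :=
  match x with
  | inl a => a * k.-1
  | inr (i, j) => i * k.-1 + j.+1
  end.

Lemma card_snake_vertex : #|snake_vertex k n| = n + n.-1 * k.-2.
Proof. by rewrite card_sum card_prod !card_ord. Qed.

Lemma snake_label_lt x : snake_label x < #|snake_vertex k n|.
Proof.
rewrite card_snake_vertex; case: x => [a|[i j]] /=.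
- by have := ltn_ord a; nia.
- by have := ltn_ord i; have := ltn_ord j; nia.
Qed.

Lemma snake_label_inj : injective snake_label.
Proof.
have d_gt0 : 0 < k.-1 by lia.
have off_lt (j : 'I_k.-2) : j.+1 < k.-1 by have := ltn_ord j; lia.
move=> [a|[i j]] [b|[i' j']] /= /(congr1 (edivn^~ k.-1)).
- by rewrite -[a * _]addn0 -[b * _]addn0 !edivn_eq // => -[/val_inj ->].
- by rewrite -[a * _]addn0 !edivn_eq.
- by rewrite -[b * _]addn0 !edivn_eq.
- by rewrite !edivn_eq // => -[/val_inj -> /val_inj ->].
Qed.

Lemma snake_arc_coprime u v :
  snake_arc u v -> coprime (2 * snake_label u + 1) (2 * snake_label v + 1).
Proof.
have succ_cop x y : y = x.+1 -> coprime (2 * x + 1) (2 * y + 1).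
  by move=> ->; apply: coprime_consecutive_odd.
case: u v => [a|[i j]] [b|[i' j']] /=.
- by move/eqP ->; apply: coprime_odd_multiples_succ.
- by case/andP=> /eqP -> /eqP ->; apply: succ_cop; lia.
- by case/andP=> /eqP -> /eqP ->; apply: succ_cop; have := ltn_ord j; lia.
- by case/andP=> /eqP -> /eqP ->; apply: succ_cop; lia.
Qed.

Lemma snake_odd_prime : odd_prime (@snake_adj k n).
Proof.
apply: (odd_prime_inj snake_label_inj snake_label_lt) => u v /orP[] uv.
  exact: snake_arc_coprime.
by rewrite coprime_sym; apply: snake_arc_coprime.
Qed.

End SnakeLabel.

Theorem theorem3p2 (k n : nat) : 3 <= k -> 2 <= n -> odd_prime (@snake_adj k n).
Proof. by move=> k_ge3 _; apply: snake_odd_prime; apply: ltnW. Qed.
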